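(* Let $V\subset\mathbb{R}^{n_s}$ be an oriented open set, $\mathcal{G}$ a Riemannian metric on $V$, $\mathcal{J}$ a taming map on $V$, and $\mathcal{N}=\mu(\mathcal{J})$. Then $$\{(f,\mathfrak{A})\in\mathrm{Iso}(V,\mathcal{G})\times\mathrm{Sp}(2n_v,\mathbb{R}):\mathfrak{A}\cdot\mathcal{N}=\mathcal{N}\circ f\}=\{(f,\mathfrak{A})\in\mathrm{Iso}(V,\mathcal{G})\times\mathrm{Sp}(2n_v,\mathbb{R}):\mathfrak{A}\mathcal{J}\mathfrak{A}^{-1}=\mathcal{J}\circ f\},$$ so that the identity map gives a canonical isomorphism of groups $\mathrm{U}(\mathcal{G},\mathcal{N})\cong\mathrm{U}(\mathcal{G},\mathcal{J})$ between these two sets (with componentwise composition).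
   Context: $\mathrm{Iso}(V,\mathcal{G})$ is the isometry group of $(V,\mathcal{G})$. The standard symplectic form $\omega$ on $\mathbb{R}^{2n_v}$ has matrix $\begin{pmatrix}0&-\mathrm{Id}\\ \mathrm{Id}&0\end{pmatrix}$ in the canonical basis; $\mathrm{Sp}(2n_v,\mathbb{R})$ is its stabilizer. A taming map is a smooth $\mathcal{J}\colon V\to\mathrm{Aut}(\mathbb{R}^{2n_v})$ whose values are complex structures $J$ with $\omega(J\cdot,J\cdot)=\omega$ and $\omega(\xi,J\xi)>0$ for $\xi\neq0$; every taming map is uniquely of the form $\begin{pmatrix}-\mathcal{I}^{-1}\mathcal{R} & \mathcal{I}^{-1}\\ -\mathcal{I}-\mathcal{R}\mathcal{I}^{-1}\mathcal{R} & \mathcal{R}\mathcal{I}^{-1}\end{pmatrix}$ with smooth $\mathcal{R},\mathcal{I}\colon V\to\mathrm{Sym}(n_v,\mathbb{R})$, $\mathcal{I}$ pointwise positive definite, and $\mu(\mathcal{J})=\mathcal{R}+i\mathcal{I}\colon V\to\mathbb{SH}(n_v)$ (the Siegel upper space of complex symmetric matrices with positive definite imaginary part). For $\mathfrak{A}=\begin{pmatrix}a&b\\ c&d\end{pmatrix}$ in $n_v\times n_v$ blocks, $\mathfrak{A}\cdot\tau=(c+d\tau)(a+b\tau)^{-1}$, applied pointwise to $\mathcal{N}$. *)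

From mathcomp Require Import all_boot all_algebra.
From mathcomp Require Import all_classical all_reals all_analysis.
From mathcomp Require Import complex.
Import numFieldNormedType.Exports.
Local Open Scope ring_scope.
Local Open Scope classical_set_scope.

Set Implicit Arguments.
Unset Strict Implicit.
Unset Printing Implicit Defensive.

(* Points of R^ns are row vectors 'rV[R]_ns.  Real matrices of size 2 n_v
   are represented as 'M[R]_(nv + nv), split into nv x nv blocks. *)

Fixpoint iterD (R : realType) (ns : nat) (vs : seq 'rV[R]_ns)
  (g : 'rV[R]_ns -> R) : 'rV[R]_ns -> R :=
  match vs with
  | [::] => g
  | v :: vs' => 'D_v (iterD vs' g)
  end.

Definition smooth_fun_on (R : realType) (ns : nat) (V : set 'rV[R]_ns)
  (g : 'rV[R]_ns -> R) : Prop :=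
  forall (vs : seq 'rV[R]_ns) (x : 'rV[R]_ns), V x ->
    {for x, continuous (iterD vs g)} /\
    forall v : 'rV[R]_ns, derivable (iterD vs g) x v.

Definition smooth_mx_on (R : realType) (ns p q : nat) (V : set 'rV[R]_ns)
  (F : 'rV[R]_ns -> 'M[R]_(p, q)) : Prop :=
  forall i j, smooth_fun_on V (fun x => F x i j).

Definition sym_mx (R : realType) (n : nat) (M : 'M[R]_n) : Prop := M^T = M.

Definition posdef_mx (R : realType) (n : nat) (M : 'M[R]_n) : Prop :=
  sym_mx M /\ forall v : 'rV[R]_n, v != 0 -> 0 < (v *m M *m v^T) 0 0.

Definition riemannian_metric (R : realType) (ns : nat) (V : set 'rV[R]_ns)
  (G : 'rV[R]_ns -> 'M[R]_ns) : Prop :=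
  smooth_mx_on V G /\ forall x, V x -> posdef_mx (G x).

Definition dmap (R : realType) (ns : nat) (f : 'rV[R]_ns -> 'rV[R]_ns)
  (x u : 'rV[R]_ns) : 'rV[R]_ns := 'D_u f x.

Definition isometry_of (R : realType) (ns : nat) (V : set 'rV[R]_ns)
  (G : 'rV[R]_ns -> 'M[R]_ns) (f : 'rV[R]_ns -> 'rV[R]_ns) : Prop :=
  (forall x, V x -> V (f x)) /\
  (exists g : 'rV[R]_ns -> 'rV[R]_ns,
     (forall x, V x -> V (g x)) /\
     (forall x, V x -> g (f x) = x) /\ (forall x, V x -> f (g x) = x) /\
     (forall k, smooth_fun_on V (fun x => f x 0 k)) /\
     (forall k, smooth_fun_on V (fun x => g x 0 k))) /\
  (forall x u w, V x ->
     (dmap f x u *m G (f x) *m (dmap f x w)^T) = u *m G x *m w^T).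

Definition omega_mx (R : realType) (nv : nat) : 'M[R]_(nv + nv) :=
  block_mx 0 (- 1%:M) 1%:M 0.

Definition symplectic (R : realType) (nv : nat) (A : 'M[R]_(nv + nv)) : Prop :=
  A^T *m omega_mx R nv *m A = omega_mx R nv.

Definition omega (R : realType) (nv : nat) (xi eta : 'cV[R]_(nv + nv)) : R :=
  (xi^T *m omega_mx R nv *m eta) 0 0.

Definition taming_map (R : realType) (ns nv : nat) (V : set 'rV[R]_ns)
  (J : 'rV[R]_ns -> 'M[R]_(nv + nv)) : Prop :=
  smooth_mx_on V J /\
  forall x, V x ->
    [/\ J x *m J x = - 1%:M,
        forall xi eta, omega (J x *m xi) (J x *m eta) = omega xi eta &
        forall xi : 'cV[R]_(nv + nv), xi != 0 -> 0 < omega xi (J x *m xi)].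

Definition taming_block (R : realType) (nv : nat) (Rm Im : 'M[R]_nv)
  : 'M[R]_(nv + nv) :=
  block_mx (- (invmx Im *m Rm)) (invmx Im)
           (- Im - Rm *m invmx Im *m Rm) (Rm *m invmx Im).

Definition cplx_mx (R : realType) (nv : nat) (Rm Im : 'M[R]_nv) : 'M[R[i]]_nv :=
  \matrix_(i, j) Complex (Rm i j) (Im i j).

Definition is_mu (R : realType) (ns nv : nat) (V : set 'rV[R]_ns)
  (J : 'rV[R]_ns -> 'M[R]_(nv + nv)) (N : 'rV[R]_ns -> 'M[R[i]]_nv) : Prop :=
  exists Rf If : 'rV[R]_ns -> 'M[R]_nv,
    [/\ smooth_mx_on V Rf, smooth_mx_on V If &
      forall x, V x ->
        [/\ sym_mx (Rf x), posdef_mx (If x),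
            J x = taming_block (Rf x) (If x) &
            N x = cplx_mx (Rf x) (If x)]].

Definition real_cmx (R : realType) (p q : nat) (M : 'M[R]_(p, q)) : 'M[R[i]]_(p, q) :=
  map_mx (fun r => Complex r 0) M.

Definition sp_act (R : realType) (nv : nat) (A : 'M[R]_(nv + nv))
  (tau : 'M[R[i]]_nv) : 'M[R[i]]_nv :=
  (real_cmx (dlsubmx A) + real_cmx (drsubmx A) *m tau) *m
  invmx (real_cmx (ulsubmx A) + real_cmx (ursubmx A) *m tau).

From mathcomp Require Import all_boot all_algebra.
From mathcomp Require Import all_classical all_reals all_analysis.
From mathcomp Require Import complex.
Import numFieldNormedType.Exports.
Import order.Order.TTheory GRing.Theory Num.Theory.
Local Open Scope ring_scope.
Local Open Scope classical_set_scope.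

Set Implicit Arguments.
Unset Strict Implicit.
Unset Printing Implicit Defensive.

(* Write tau = R + i I.  The taming block J = taming_block R I maps the real
   and imaginary parts [1; R], [0; I] of the frame [1; tau] to -[0; I] and
   [1; R]: on the columns of [1; tau], J acts as multiplication by i.  For
   A = [a b; c d] we have A [1; tau] = [1; A.tau] (a + b tau), and a + b tau
   is invertible: for a kernel vector v, the real and imaginary parts x, y of
   [1; tau] v satisfy A x, A y in the Lagrangian {0} x R^n, so
   0 = omega(x, y) = -(Re v^T I Re v + Im v^T I Im v) and v = 0.  Hence
   A.tau1 = tau2 iff A carries the frame of J1 onto that of J2 compatibly
   with i, iff A J1 A^-1 = J2. *)

Section ComplexMatrices.
Variable R : fieldType.

Definition cmx p q (P Q : 'M[R]_(p, q)) : 'M[R[i]]_(p, q) :=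
  \matrix_(i, j) Complex (P i j) (Q i j).

Lemma sum_Complex n (f g : 'I_n -> R) :
  \sum_k Complex (f k) (g k) = Complex (\sum_k f k) (\sum_k g k).
Proof.
apply: (big_rec3 (fun (z : R[i]) x y => z = Complex x y)) => //.
by move=> i z x y _ ->.
Qed.

Lemma cmx_mul p q r (P Q : 'M[R]_(p, q)) (P' Q' : 'M[R]_(q, r)) :
  cmx P Q *m cmx P' Q' = cmx (P *m P' - Q *m Q') (P *m Q' + Q *m P').
Proof.
apply/matrixP=> i j; rewrite !mxE.
under eq_bigr do rewrite !mxE.
by rewrite sum_Complex sumrB big_split.
Qed.

Lemma cmx_add p q (P Q P' Q' : 'M[R]_(p, q)) :
  cmx P Q + cmx P' Q' = cmx (P + P') (Q + Q').
Proof. by apply/matrixP=> i j; rewrite !mxE. Qed.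

Lemma cmx0 p q : cmx (0 : 'M[R]_(p, q)) 0 = 0.
Proof. by apply/matrixP=> i j; rewrite !mxE. Qed.

Lemma cmx_inj p q (P Q P' Q' : 'M[R]_(p, q)) :
  cmx P Q = cmx P' Q' -> P = P' /\ Q = Q'.
Proof.
by move=> /matrixP eqPQ; split; apply/matrixP=> i j; have := eqPQ i j;
  rewrite !mxE => -[].
Qed.

Lemma cmx_surj p q (Z : 'M[R[i]]_(p, q)) : exists P Q, Z = cmx P Q.
Proof.
exists (map_mx (fun z => complex.Re z) Z), (map_mx (fun z => complex.Im z) Z).
by apply/matrixP=> i j; rewrite !mxE; case: (Z i j).
Qed.

End ComplexMatrices.

Lemma real_cmxE (R : realType) p q (P : 'M[R]_(p, q)) : real_cmx P = cmx P 0.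
Proof. by apply/matrixP=> i j; rewrite !mxE. Qed.

Lemma cplx_mxE (R : realType) n (P Q : 'M[R]_n) : cplx_mx P Q = cmx P Q.
Proof. by []. Qed.

Lemma unitmx_ker0 (F : fieldType) n (M : 'M[F]_n) :
  (forall v : 'cV_n, M *m v = 0 -> v = 0) -> M \in unitmx.
Proof.
move=> ker0; rewrite -unitmx_tr -row_free_unit -kermx_eq0.
apply/eqP/row_matrixP => i; rewrite row0; apply: trmx_inj; rewrite trmx0.
apply: ker0; apply: trmx_inj.
by rewrite trmx_mul trmxK trmx0 -row_mul mulmx_ker row0.
Qed.

Section TamingBlock.
Variables (R : realType) (n : nat).
Implicit Types (Rm Im : 'M[R]_n).

Lemma taming_block_re_frame Rm Im :
  taming_block Rm Im *m col_mx 1%:M Rm = - col_mx 0 Im.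
Proof.
rewrite /taming_block mul_block_col !mulmx1 opp_col_mx oppr0 -!mulmxA.
by rewrite addNr addrNK.
Qed.

Lemma taming_block_im_frame Rm Im : Im \in unitmx ->
  taming_block Rm Im *m col_mx 0 Im = col_mx 1%:M Rm.
Proof.
move=> Im_unit; rewrite /taming_block mul_block_col !mulmx0 !add0r -mulmxA.
by rewrite mulVmx // mulmx1.
Qed.

Lemma usubmx_taming_block_mul k Rm Im (m p : 'M[R]_(n, k)) :
  usubmx (taming_block Rm Im *m col_mx m p) = invmx Im *m (p - Rm *m m).
Proof. by rewrite mul_block_col col_mxKu mulmxBr mulNmx mulmxA addrC. Qed.

Lemma frame_unitmx Rm Im : Im \in unitmx ->
  row_mx (col_mx 1%:M Rm) (col_mx 0 Im) \in unitmx.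
Proof.
by move=> Im_unit; rewrite -block_mxEh unitmxE det_lblock det1 mul1r.
Qed.

Variables (a b c d R1 I1 R2 I2 : 'M[R]_n).
Hypotheses (I1_unit : I1 \in unitmx) (I2_unit : I2 \in unitmx).

Let A := block_mx a b c d.
Let m1 := a + b *m R1.
Let m2 := b *m I1.
Let p1 := c + d *m R1.
Let p2 := d *m I1.

Let A_re_frame : A *m col_mx 1%:M R1 = col_mx m1 p1.
Proof. by rewrite mul_block_col !mulmx1. Qed.

Let A_im_frame : A *m col_mx 0 I1 = col_mx m2 p2.
Proof. by rewrite mul_block_col !mulmx0 !add0r. Qed.

Lemma block_mx_taming_block_commP :
  p1 = R2 *m m1 - I2 *m m2 /\ p2 = R2 *m m2 + I2 *m m1 <->
  A *m taming_block R1 I1 = taming_block R2 I2 *m A.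
Proof.
split=> [[p1E p2E] | AJ].
- have A_re : A *m col_mx 1%:M R1 = col_mx 1%:M R2 *m m1 - col_mx 0 I2 *m m2.
    by rewrite A_re_frame !mul_col_mx opp_col_mx add_col_mx mul1mx mul0mx
      oppr0 addr0 p1E.
  have A_im : A *m col_mx 0 I1 = col_mx 1%:M R2 *m m2 + col_mx 0 I2 *m m1.
    by rewrite A_im_frame !mul_col_mx add_col_mx mul1mx mul0mx addr0 p2E.
  set F := row_mx (col_mx 1%:M R1) (col_mx 0 I1).
  suff eqF : A *m taming_block R1 I1 *m F = taming_block R2 I2 *m A *m F.
    by rewrite -[LHS](mulmxK (frame_unitmx R1 I1_unit)) eqF mulmxK
      ?frame_unitmx.
  rewrite !mul_mx_row; congr row_mx; rewrite -!mulmxA.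
    rewrite taming_block_re_frame mulmxN A_im A_re mulmxBr !mulmxA.
    rewrite taming_block_re_frame taming_block_im_frame //.
    by rewrite mulNmx opprD addrC.
  rewrite taming_block_im_frame // A_re A_im mulmxDr !mulmxA.
  rewrite taming_block_re_frame taming_block_im_frame //.
  by rewrite addrC !mulNmx.
- have J_re : taming_block R2 I2 *m col_mx m1 p1 = - col_mx m2 p2.
    by rewrite -A_re_frame -A_im_frame mulmxA -AJ -mulmxA
      taming_block_re_frame mulmxN.
  have J_im : taming_block R2 I2 *m col_mx m2 p2 = col_mx m1 p1.
    by rewrite -A_re_frame -A_im_frame mulmxA -AJ -mulmxA taming_block_im_frame.
  move: (congr1 usubmx J_re) (congr1 usubmx J_im).
  rewrite !usubmx_taming_block_mul opp_col_mx !col_mxKu.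
  move=> /(congr1 (mulmx I2)); rewrite !mulmxA mulmxV // mul1mx mulmxN.
  move=> /eqP; rewrite subr_eq => /eqP ->.
  move=> /(congr1 (mulmx I2)); rewrite !mulmxA mulmxV // mul1mx.
  by move=> /eqP; rewrite subr_eq => /eqP ->; split; rewrite addrC.
Qed.

End TamingBlock.

Section Symplectic.
Variables (R : realType) (n : nat).

Lemma omega_mx_sqr : omega_mx R n *m omega_mx R n = - 1%:M.
Proof.
rewrite /omega_mx mulmx_block !mul0mx !mulmx0 !add0r !addr0 mulmx1 mul1mx.
by rewrite -[0 : 'M[R]_n]oppr0 -opp_block_mx -scalar_mx_block.
Qed.

Lemma symplectic_unit (A : 'M[R]_(n + n)) : symplectic A -> A \in unitmx.
Proof.
move=> sA; have /mulmx1_unit[] // :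
  (- (omega_mx R n *m A^T *m omega_mx R n)) *m A = 1%:M.
by rewrite mulNmx -!mulmxA (mulmxA A^T) sA omega_mx_sqr opprK.
Qed.

Lemma omega_mx_vertical (s t : 'cV[R]_n) :
  (col_mx 0 s)^T *m omega_mx R n *m col_mx 0 t = 0.
Proof.
rewrite tr_col_mx trmx0 /omega_mx mul_row_block mul_row_col !mul0mx !mulmx0.
by rewrite !add0r mul0mx.
Qed.

Lemma posdef_unit (I : 'M[R]_n) : posdef_mx I -> I \in unitmx.
Proof.
move=> [_ Ipos]; apply: unitmx_ker0 => v Iv0; have [//|nz] := eqVneq v 0.
suff : v^T != 0 by move=> /Ipos; rewrite trmxK -mulmxA Iv0 mulmx0 mxE ltxx.
by rewrite -trmx0 (inj_eq trmx_inj).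
Qed.

Lemma posdef_quad_ge0 (I : 'M[R]_n) (v : 'cV[R]_n) :
  posdef_mx I -> 0 <= (v^T *m I *m v) 0 0.
Proof.
move=> [_ Ipos]; have [->|nz] := eqVneq v^T 0; first by rewrite !mul0mx mxE.
by have /ltW := Ipos _ nz; rewrite trmxK.
Qed.

Lemma posdef_quad_eq0 (I : 'M[R]_n) (v : 'cV[R]_n) :
  posdef_mx I -> (v^T *m I *m v) 0 0 = 0 -> v = 0.
Proof.
move=> [_ Ipos] q0; have [/(congr1 trmx)|nz] := eqVneq v^T 0.
  by rewrite trmxK trmx0.
by have := Ipos _ nz; rewrite trmxK q0 ltxx.
Qed.

Lemma omega_mx_cplx_frame (Rm Im : 'M[R]_n) (v1 v2 : 'cV[R]_n) :
  sym_mx Rm -> sym_mx Im ->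
  (col_mx v1 (Rm *m v1 - Im *m v2))^T *m omega_mx R n *m
     col_mx v2 (Rm *m v2 + Im *m v1)
  = - (v1^T *m Im *m v1 + v2^T *m Im *m v2).
Proof.
move=> sR sI.
rewrite tr_col_mx /omega_mx mul_row_block mul_row_col !mulmx0 !mulmx1 !add0r.
rewrite addr0 linearB /= !trmx_mul sR sI mulmxN mulmxDr mulmxBl !mulmxA.
by rewrite mulmx1 !mulNmx -addrA addrCA addNKr opprD addrC.
Qed.

Lemma symplectic_cplx_frame_unit (A : 'M[R]_(n + n)) (Rm Im : 'M[R]_n) :
  symplectic A -> sym_mx Rm -> posdef_mx Im ->
  cmx (ulsubmx A + ursubmx A *m Rm) (ursubmx A *m Im) \in unitmx.
Proof.
move=> sA sR pI; apply: unitmx_ker0 => v.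
have [v1 [v2 ->]] := cmx_surj v.
rewrite cmx_mul -(cmx0 R) => /cmx_inj[re0 im0].
set x := col_mx v1 (Rm *m v1 - Im *m v2).
set y := col_mx v2 (Rm *m v2 + Im *m v1).
have Ax : usubmx (A *m x) = 0.
  by rewrite -{1}[A]submxK mul_block_col col_mxKu -re0 mulmxDl mulmxBr
    !mulmxA addrA.
have Ay : usubmx (A *m y) = 0.
  by rewrite -{1}[A]submxK mul_block_col col_mxKu -im0 mulmxDl mulmxDr
    !mulmxA addrA.
have omega_xy0 : x^T *m omega_mx R n *m y = 0.
  have -> : x^T *m omega_mx R n *m y =
            (A *m x)^T *m omega_mx R n *m (A *m y).
    by rewrite -{1}sA trmx_mul !mulmxA.
  by rewrite -(vsubmxK (A *m x)) -(vsubmxK (A *m y)) Ax Ay omega_mx_vertical.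
move: omega_xy0; rewrite (omega_mx_cplx_frame _ _ sR pI.1) => /eqP.
rewrite oppr_eq0 => /eqP /(congr1 (fun M : 'M[R]_1 => M 0 0)).
rewrite [LHS]mxE [RHS]mxE.
move=> /eqP; rewrite paddr_eq0 ?posdef_quad_ge0 // => /andP[/eqP q1 /eqP q2].
by rewrite (posdef_quad_eq0 pI q1) (posdef_quad_eq0 pI q2) cmx0.
Qed.

End Symplectic.

Lemma mulmx_invmx_eq (F : comUnitRingType) n (M X Y : 'M[F]_n) :
  M \in unitmx -> (X *m invmx M = Y) = (X = Y *m M).
Proof.
by move=> Mu; rewrite propeqE; split=> [<-|->]; rewrite ?mulmxKV ?mulmxK.
Qed.

Lemma sp_act_cplx_mxP (R : realType) n (A : 'M[R]_(n + n))
    (R1 I1 R2 I2 : 'M[R]_n) :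
  symplectic A -> sym_mx R1 -> posdef_mx I1 -> posdef_mx I2 ->
  sp_act A (cplx_mx R1 I1) = cplx_mx R2 I2 <->
  A *m taming_block R1 I1 *m invmx A = taming_block R2 I2.
Proof.
move=> sA sR1 pI1 pI2.
have := block_mx_taming_block_commP (ulsubmx A) (ursubmx A) (dlsubmx A)
  (drsubmx A) R1 R2 (posdef_unit pI1) (posdef_unit pI2).
rewrite submxK (mulmx_invmx_eq _ _ (symplectic_unit sA)) => /propext <-.
rewrite /sp_act !real_cmxE !cplx_mxE !cmx_mul !cmx_add.
rewrite !mul0mx !subr0 !addr0 !add0r.
rewrite (mulmx_invmx_eq _ _ (symplectic_cplx_frame_unit sA sR1 pI1)) cmx_mul.
by split=> [/cmx_inj | [-> ->]].
Qed.

Lemma is_mu_sp_actP (R : realType) ns nv (V : set 'rV[R]_ns)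
    (J : 'rV[R]_ns -> 'M[R]_(nv + nv)) (N : 'rV[R]_ns -> 'M[R[i]]_nv)
    (A : 'M[R]_(nv + nv)) x y :
  is_mu V J N -> symplectic A -> V x -> V y ->
  sp_act A (N x) = N y <-> A *m J x *m invmx A = J y.
Proof.
move=> [Rf [If [_ _ RIf]]] sA Vx Vy.
have [sRx pIx -> ->] := RIf x Vx; have [_ pIy -> ->] := RIf y Vy.
exact: sp_act_cplx_mxP.
Qed.

Theorem proposition2p29 (R : realType) (ns nv : nat) (V : set 'rV[R]_ns)
  (G : 'rV[R]_ns -> 'M[R]_ns) (J : 'rV[R]_ns -> 'M[R]_(nv + nv))
  (N : 'rV[R]_ns -> 'M[R[i]]_nv) :
  open V -> riemannian_metric V G -> taming_map V J -> is_mu V J N ->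
  [set fA : ('rV[R]_ns -> 'rV[R]_ns) * 'M[R]_(nv + nv) |
     [/\ isometry_of V G fA.1, symplectic fA.2 &
         forall x, V x -> sp_act fA.2 (N x) = N (fA.1 x)]]
  =
  [set fA : ('rV[R]_ns -> 'rV[R]_ns) * 'M[R]_(nv + nv) |
     [/\ isometry_of V G fA.1, symplectic fA.2 &
         forall x, V x -> fA.2 *m J x *m invmx fA.2 = J (fA.1 x)]].
Proof.
move=> _ _ _ muN; apply/seteqP; split=> -[f A] [fiso sA eqA];
  split=> // x Vx; apply/(is_mu_sp_actP muN sA Vx (fiso.1 x Vx)); exact: eqA.
Qed.
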